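(* Let $D\subset\mathbb N^n$ be a finite set not contained in any coordinate hyperplane of $\mathbb R^n$, $p$ a prime, and $I\subset\{1,\dots,n\}$ with $\#I=k$. Then $\delta_p(D)\le\delta_p(D_I)+n-k$.
   Context: $D_I=\{\mathbf d\in D:d_j=0\text{ for }j\notin I\}$, regarded as a subset of $\mathbb N^I$. For a finite $D'\subset\mathbb N^{n'}$: if $D'$ is contained in a coordinate hyperplane, $\delta_p(D')=\infty$; otherwise $\delta_p(D')=\frac1{p-1}\min_{r\ge1}\frac{s_{D',p}(r)}r$, where $s_{D',p}(r)$ is the minimum of $\sum_{\mathbf d}s_p(u_{\mathbf d})$ over $U=(u_{\mathbf d})\in\{0,\dots,p^r-1\}^{D'}$ with $\sum u_{\mathbf d}\mathbf d\equiv0\pmod{p^r-1}$ and all coordinates of $\sum u_{\mathbf d}\mathbf d$ positive, and $s_p$ is the base-$p$ digit sum (the minimum over $r$ exists). *)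

From HB Require Import structures.
From mathcomp Require Import all_boot all_order all_algebra.
From mathcomp Require Import all_classical all_reals ereal.
Set Implicit Arguments. Unset Strict Implicit. Unset Printing Implicit Defensive.
Import Order.TTheory GRing.Theory Num.Theory.

(* Vectors of N^n are finite functions 'I_n -> nat; a finite set D of such
   vectors is a duplicate-free sequence. *)
Notation vec n := {ffun 'I_n -> nat}.

(* base-p digit sum s_p(m) (fuel m suffices since m %/ p < m when p >= 2) *)
Fixpoint digsum_aux (fuel p m : nat) : nat :=
  match fuel with
  | 0 => 0
  | f.+1 => if m == 0 then 0 else m %% p + digsum_aux f p (m %/ p)
  end.
Definition digsum (p m : nat) : nat := digsum_aux m.+1 p m.

(* D_I = {d in D : d_j = 0 for j notin I}, viewed inside N^n
   (its coordinates outside I vanish; N^I is identified with these vectors). *)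
Definition restrD n (I : {set 'I_n}) (D : seq (vec n)) : seq (vec n) :=
  seq.filter (fun d : vec n => [forall j : 'I_n, (j \notin I) ==> (d j == 0)]) D.

Definition in_coord_hyperplane n (J : {set 'I_n}) (D : seq (vec n)) : bool :=
  [exists j in J, all (fun d : vec n => d j == 0) D].

Definition admissible n (p r : nat) (J : {set 'I_n}) (D : seq (vec n))
  (u : vec n -> nat) : Prop :=
  (forall d, d \in D -> u d < p ^ r) /\
  (forall j, j \in J ->
     (p ^ r - 1 %| \sum_(d <- D) u d * d j) /\ 0 < \sum_(d <- D) u d * d j).

Section Delta.
Variable R : realType.
Local Open Scope ereal_scope.

(* s_{D,p}(r) : minimum (= infimum of a nonempty set of naturals) *)
Definition s_Dp n (p : nat) (J : {set 'I_n}) (D : seq (vec n)) (r : nat) : \bar R :=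
  ereal_inf [set ((\sum_(d <- D) digsum p (u d))%:R)%:E
            | u in [set u | admissible p r J D u]].

(* delta_p(D) = 1/(p-1) * min_{r>=1} s(r)/r  (min written as inf; the min
   exists), or +oo if D is contained in a coordinate hyperplane *)
Definition delta_p n (p : nat) (J : {set 'I_n}) (D : seq (vec n)) : \bar R :=
  if in_coord_hyperplane J D then +oo
  else (((p - 1)%:R : R)^-1)%:E *
       ereal_inf [set s_Dp p J D r * (((r%:R : R)^-1)%:E) | r in [set r : nat | (0 < r)%N]].
End Delta.

From HB Require Import structures.
From mathcomp Require Import all_boot all_order all_algebra.
From mathcomp Require Import all_classical all_reals ereal.
From mathcomp Require Import zify.
Set Implicit Arguments. Unset Strict Implicit. Unset Printing Implicit Defensive.
Import Order.TTheory GRing.Theory Num.Theory.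

(* Any admissible U for D_I extends to an admissible U for D at cost at most
   (n - k) r (p - 1): for each coordinate j outside I pick some d in D with
   d_j <> 0 (it exists, and is not in D_I) and give it the weight p^r - 1,
   whose digit sum is r (p - 1); this weight is divisible by p^r - 1 and makes
   coordinate j positive, while the coordinates in I keep their old
   divisibility and positivity.  Dividing by r (p - 1) and taking infima over
   r yields the bound on delta_p. *)

Lemma digsum_aux_expn_sub1 p f r : 1 < p -> p ^ r <= f ->
  digsum_aux f p (p ^ r - 1) = r * (p - 1).
Proof.
move=> p_gt1; elim: f r => [|f IHf] [|r] //= le_pr_f.
  by have := expn_gt0 p r.+1; rewrite (ltnW p_gt1); lia.
have pr_gt0 : 0 < p ^ r by rewrite expn_gt0 ltnW.
have -> : p ^ r.+1 - 1 = (p ^ r - 1) * p + (p - 1) by rewrite expnS; nia.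
have -> : ((p ^ r - 1) * p + (p - 1) == 0) = false by apply/negbTE; nia.
rewrite modnMDl divnMDl ?(ltnW p_gt1) // modn_small ?divn_small ?addn0; try lia.
rewrite IHf; first lia.
by move: le_pr_f; rewrite expnS; nia.
Qed.

Lemma digsum_expn_sub1 p r : 1 < p -> digsum p (p ^ r - 1) = r * (p - 1).
Proof. by move=> p_gt1; apply: digsum_aux_expn_sub1 => //; lia. Qed.

Definition supported_in n (I : {set 'I_n}) (d : vec n) : bool :=
  [forall j : 'I_n, (j \notin I) ==> (d j == 0)].

Lemma restrDE n (I : {set 'I_n}) (D : seq (vec n)) :
  restrD I D = seq.filter (supported_in I) D.
Proof. by []. Qed.

Lemma supported_in_eq0 n (I : {set 'I_n}) d j :
  supported_in I d -> j \notin I -> d j = 0.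
Proof. by move=> /forallP /(_ j) /implyP H /H /eqP. Qed.

Section CoordinateWitness.
Variables (n : nat) (D : seq (vec n)).
Hypothesis D_spans : ~~ in_coord_hyperplane [set: 'I_n] D.

Definition coord_witness (j : 'I_n) : vec n :=
  nth [ffun=> 0] D (find (fun d : vec n => d j != 0) D).

Lemma has_coord_neq0 j : has (fun d : vec n => d j != 0) D.
Proof.
apply: contraR D_spans; rewrite -all_predC => all_eq0.
apply/existsP; exists j; rewrite inE /=.
by apply: sub_all all_eq0 => d /negPn.
Qed.

Lemma coord_witness_mem j : coord_witness j \in D.
Proof. by apply: mem_nth; rewrite -has_find has_coord_neq0. Qed.

Lemma coord_witness_neq0 j : coord_witness j j != 0.
Proof. exact: (nth_find _ (has_coord_neq0 j)). Qed.

End CoordinateWitness.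

Definition extend_weights n p r (I : {set 'I_n}) (D : seq (vec n))
    (u : vec n -> nat) (d : vec n) : nat :=
  if supported_in I d then u d
  else if d \in [seq coord_witness D j | j <- enum (~: I)] then p ^ r - 1
  else 0.

Section ExtendWeights.
Variables (n p r : nat) (I : {set 'I_n}) (D : seq (vec n)) (u : vec n -> nat).
Hypotheses (p_gt1 : 1 < p) (r_gt0 : 0 < r) (uniq_D : uniq D)
  (D_spans : ~~ in_coord_hyperplane [set: 'I_n] D)
  (u_adm : admissible p r I (restrD I D) u).

Local Notation ext := (extend_weights p r I D u).
Local Notation W := [seq coord_witness D j | j <- enum (~: I)].

Lemma expn_sub1_gt0 : 0 < p ^ r - 1.
Proof.
have : p ^ 1 <= p ^ r by rewrite leq_exp2l.
by rewrite expn1; lia.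
Qed.

Lemma big_extend_weights (F : nat -> vec n -> nat) :
  \sum_(d <- D) F (ext d) d =
  \sum_(d <- restrD I D) F (u d) d + \sum_(d <- D | ~~ supported_in I d) F (ext d) d.
Proof.
rewrite (bigID (supported_in I)) restrDE big_filter /=.
by congr (_ + _); apply: eq_bigr => d; rewrite /extend_weights => ->.
Qed.

Lemma admissible_extend_weights : admissible p r [set: 'I_n] D ext.
Proof.
have [u_lt u_coord] := u_adm.
split=> [d d_in|j _].
  rewrite /extend_weights; case: ifP => [supp_d|_]; last by case: ifP; lia.
  by apply: u_lt; rewrite restrDE mem_filter supp_d.
rewrite (big_extend_weights (fun w d => w * d j)).
have dvd_rest : p ^ r - 1 %| \sum_(d <- D | ~~ supported_in I d) ext d * d j.
  apply: dvdn_sum => d /negbTE supp_d; rewrite /extend_weights supp_d.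
  by case: ifP => _; [apply: dvdn_mulr | rewrite mul0n dvdn0].
have [j_in | j_out] := boolP (j \in I).
  have [dvd_I pos_I] := u_coord j j_in.
  by split; [apply: dvdn_add | apply: ltn_addr].
have -> : \sum_(d <- restrD I D) u d * d j = 0.
  apply: big1_seq => d /andP [_]; rewrite restrDE mem_filter => /andP [supp_d _].
  by rewrite (supported_in_eq0 supp_d j_out) muln0.
set c := coord_witness D j.
have c_unsupp : ~~ supported_in I c.
  by apply: contra (coord_witness_neq0 D_spans j) => /supported_in_eq0 ->.
have c_W : c \in W by apply: map_f; rewrite mem_enum inE.
split=> //; rewrite add0n (big_rem c) ?coord_witness_mem //= c_unsupp ltn_addr //.
rewrite /extend_weights (negbTE c_unsupp) c_W muln_gt0.
by rewrite expn_sub1_gt0 lt0n coord_witness_neq0.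
Qed.

Lemma digsum_extend_weights_le :
  \sum_(d <- D) digsum p (ext d) <=
  \sum_(d <- restrD I D) digsum p (u d) + #|~: I| * (r * (p - 1)).
Proof.
rewrite (big_extend_weights (fun w _ => digsum p w)) leq_add2l.
apply: (@leq_trans (\sum_(d <- D | d \in W) r * (p - 1))).
  rewrite big_mkcond [leqRHS]big_mkcond /=; apply: leq_sum => d _.
  rewrite /extend_weights; case: (supported_in I d) => //=.
  by case: (d \in W) => //; rewrite digsum_expn_sub1.
rewrite big_const_seq iter_addn_0 mulnC leq_mul2r -size_filter; apply/orP; right.
have -> : #|~: I| = size W by rewrite size_map -cardE.
apply: uniq_leq_size; first exact: filter_uniq.
by move=> d; rewrite mem_filter => /andP [].
Qed.

End ExtendWeights.

Local Open Scope ereal_scope.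

Lemma s_Dp_le_restrD (R : realType) n (D : seq (vec n)) p r (I : {set 'I_n}) :
  (1 < p)%N -> (0 < r)%N -> uniq D -> ~~ in_coord_hyperplane [set: 'I_n] D ->
  s_Dp R p [set: 'I_n] D r <=
  s_Dp R p I (restrD I D) r + ((#|~: I| * (r * (p - 1)))%:R : R)%:E.
Proof.
move=> p_gt1 r_gt0 uniq_D D_spans.
rewrite -leeBlDr //; apply/ereal_infP => _ [u u_adm <-]; rewrite leeBlDr //.
apply: le_trans (ereal_inf_lbound _) _.
  by exists (extend_weights p r I D u); first exact: admissible_extend_weights.
by rewrite -EFinD lee_fin -natrD ler_nat digsum_extend_weights_le.
Qed.

Lemma ereal_inf_div_le (R : realType) (f g : nat -> \bar R) (K : R) :
  (forall r, (0 < r)%N -> f r <= g r + (r%:R * K)%R%:E) ->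
  ereal_inf [set f r * ((r%:R : R)^-1)%:E | r in [set r : nat | (0 < r)%N]] <=
  ereal_inf [set g r * ((r%:R : R)^-1)%:E | r in [set r : nat | (0 < r)%N]] + K%:E.
Proof.
move=> fg; rewrite -leeBlDr //; apply/ereal_infP => _ [r r_gt0 <-]; rewrite leeBlDr //.
apply: le_trans (ereal_inf_lbound _) _; first by exists r.
have r_neq0 : (r%:R : R)%R != 0%R by rewrite pnatr_eq0 -lt0n.
have -> : K%:E = (r%:R * K)%R%:E * ((r%:R : R)^-1)%:E.
  by rewrite -EFinM mulrC mulrA mulVf // mul1r.
rewrite -muleDl ?fin_num_adde_defl //.
by apply: lee_wpmul2r; [rewrite lee_fin invr_ge0 ler0n | exact: fg].
Qed.

Theorem lemma2p6 (R : realType) (n : nat) (D : seq (vec n)) (p : nat)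
  (I : {set 'I_n}) (k : nat) :
  uniq D ->
  ~~ in_coord_hyperplane [set: 'I_n] D ->
  prime p ->
  #|I| = k ->
  (delta_p R p [set: 'I_n] D <= delta_p R p I (restrD I D) + ((n - k)%:R : R)%:E)%E.
Proof.
move=> uniq_D D_spans /prime_gt1 p_gt1 card_I.
have card_CI : #|~: I| = (n - k)%N by rewrite cardsCs finset.setCK card_ord card_I.
rewrite /delta_p (negbTE D_spans); case: ifP => _; first by rewrite addye ?leey.
set c : R := ((p - 1)%:R)^-1%R.
set K : R := ((n - k) * (p - 1))%:R%R.
have cK : (c * K = (n - k)%:R)%R.
  by rewrite /c /K natrM mulrC mulfK // pnatr_eq0; lia.
rewrite -cK EFinM -muleDr ?fin_num_adde_defl //.
apply: lee_wpmul2l; first by rewrite lee_fin invr_ge0 ler0n.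
apply: ereal_inf_div_le => r r_gt0.
rewrite /K -natrM mulnCA -card_CI.
exact: s_Dp_le_restrD p_gt1 r_gt0 uniq_D D_spans.
Qed.
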